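(* For every $x\in\{0,1\}^{nd/2}$, \[ \lvert \phi^{-1}(x) \rvert \leq (dn)^{dn/2} \cdot \left(\frac{d^2}{n}\right)^{\lvert x\rvert},\] where $\lvert x\rvert=\sum_{j=1}^{nd/2}x(j)$.
   Context: Fix $0<c<1$, $n,d$ with $dn$ even, and $T_{\max}=\binom d2\frac n3$. Let $\mathcal{G}^*_{d,c}(n)$ be the set of $d$-regular graphs on the labeled nodes $\{1,\dots,n\}$ with at least $c\cdot T_{\max}$ triangles, in which additionally at each node the $d$ incident edges are assigned distinct labels $1,\dots,d$ (so each edge carries two labels, one from each endpoint). For $G^*\in\mathcal{G}^*_{d,c}(n)$ define the configuration ordering on its edges: for edges $e=(i_1j_1)$, $f=(i_2j_2)$ with $i_1<j_1$, $i_2<j_2$, set $e\prec f$ if $i_1<i_2$, or if $i_1=i_2$ and the label of $e$ at their common node $i_1$ is smaller than that of $f$. Let $e_1\prec\dots\prec e_{nd/2}$ be the edges in this order and $G^*[k]$ the subgraph with edges $e_1,\dots,e_k$. Define $\phi:\mathcal{G}^*_{d,c}(n)\to\{0,1\}^{nd/2}$ by $\phi(G^* )(k)=1$ if $e_k$ lies in a triangle of $G^*[k]$, and $0$ otherwise. *)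

From mathcomp Require Import all_boot all_order all_algebra.
Set Implicit Arguments. Unset Strict Implicit. Unset Printing Implicit Defensive.
Import Order.TTheory GRing.Theory Num.Theory.

(* Nodes are 'I_n (i.e. {0,...,n-1}, standing for {1,...,n}); labels are 'I_d.
   An edge-labelled graph Gstar is encoded by its "configuration" map
   nb : 'I_n -> 'I_d -> 'I_n, where nb v k is the neighbour of v reached via
   the edge carrying label k at v.  This is a bijective encoding of
   (simple d-regular graph, labelling of incident edges at every node). *)
Definition config (n d : nat) := {ffun 'I_n -> {ffun 'I_d -> 'I_n}}.

Section Defs.
Variables n d : nat.
Implicit Types (G : config n d).

Definition adj G (u v : 'I_n) : bool := [exists k, G u k == v].

(* validity: the map describes a simple graph with a proper labelling:
   no loops, the d labels at a node go to d distinct neighbours, and the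
   neighbour relation is symmetric (each edge carries one label at each end). *)
Definition valid_config G : bool :=
  [forall v, injectiveb (G v)] &&
  [forall v, forall k, (G v k != v) && adj G (G v k) v].

Definition ntriangles G : nat :=
  #|[set t : {set 'I_n} | (#|t| == 3) &&
       [forall u in t, forall v in t, (u != v) ==> adj G u v]]|.

(* the edges e = (i,j), i<j, listed in the configuration ordering:
   lexicographically by (smaller endpoint i, label of e at i). *)
Definition config_edges G : seq ('I_n * 'I_n) :=
  filter (fun p : 'I_n * 'I_n => (val p.1 < val p.2)%N)
    [seq (i, G i k) | i <- enum 'I_n, k <- enum 'I_d].

Definition in_triangle (E : seq ('I_n * 'I_n)) (e : 'I_n * 'I_n) : bool :=
  let mem_e u w := ((u, w) \in E) || ((w, u) \in E) in
  [exists w, mem_e e.1 w && mem_e e.2 w].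

(* phi(Gstar)(k) (k 0-based here: k stands for index k+1): e_{k+1} lies in a
   triangle of Gstar[k+1]. *)
Definition phi G : {ffun 'I_(n * d %/ 2) -> bool} :=
  [ffun k : 'I_(n * d %/ 2) =>
     let es := config_edges G in
     match drop k es with
     | e :: _ => in_triangle (take k.+1 es) e
     | [::] => false
     end].

Definition weight m (x : {ffun 'I_m -> bool}) : nat := #|[set j | x j]|.

End Defs.

(* G^*_{d,c}(n) with T_max = binom(d,2) n / 3 *)
Definition Gstar (R : realFieldType) (n d : nat) (c : R) : {set config n d} :=
  [set G : config n d | valid_config G &&
     (c * (('C(d, 2))%:R * n%:R / 3%:R) <= (ntriangles G)%:R)%R].

From mathcomp Require Import all_boot all_order all_algebra.
From mathcomp Require Import zify ring.
Set Implicit Arguments. Unset Strict Implicit. Unset Printing Implicit Defensive.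
Import Order.TTheory GRing.Theory Num.Theory.

(* Encode a configuration by a word indexed by its edges e_1 < ... < e_(nd/2).  For
   e_t = (i, j) with i < j, the letter records the label of e_t at j together with
   either j itself (d * n choices) or, when e_t lies in a triangle i - w - j of the
   edges up to e_t, the labels of the path i -> w -> j (d * d^2 choices).  Decoding
   the (node, label) slots in configuration order, each neighbour is determined by
   the word and by the slots already decoded: a slot (v, k) with G v k < v is the
   far end of an earlier edge, and the path of a triangle letter runs along earlier
   edges.  Hence the word determines the configuration, and the fiber of phi over x
   has at most (d n)^(nd/2 - |x|) (d^3)^|x| = (d n)^(nd/2) (d^2/n)^|x| elements. *)

Lemma index_filter (T : eqType) (a : pred T) (s : seq T) x :
  a x -> index x (filter a s) = count a (take (index x s) s).
Proof.
move=> ax; elim: s => [|y s IHs] //=.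
have [->|neq_yx] := eqVneq y x; first by rewrite ax /= eqxx.
by case: ifP => ay; rewrite /= ?ay ?(negbTE neq_yx) IHs.
Qed.

Section Slots.
Variables n d : nat.
Local Notation slot := ('I_n * 'I_d)%type.

Definition slot_rank (p : slot) : nat := p.1 * d + p.2.

Lemma enum_slotE : enum {: slot} = [seq (i, k) | i <- enum 'I_n, k <- enum 'I_d].
Proof. by rewrite enumT unlock. Qed.

Lemma map_slot_rank_enum : map slot_rank (enum {: slot}) = iota 0 (n * d).
Proof.
rewrite enum_slotE map_allpairs.
have -> : [seq slot_rank (i, k) | i <- enum 'I_n, k <- enum 'I_d]
    = [seq i * d + k | i <- map val (enum 'I_n), k <- map val (enum 'I_d)].
  by rewrite allpairs_mapl allpairs_mapr.
rewrite !val_enum_ord.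
elim: n => [|m IHm] //.
rewrite -addn1 iotaD allpairs_cat IHm /= cats0 add0n mulnDl mul1n iotaD.
by congr (_ ++ _); rewrite add0n -(addn0 (m * d)) iotaDl addn0.
Qed.

Lemma index_enum_slot p : index p (enum {: slot}) = slot_rank p.
Proof.
have p_in : index p (enum {: slot}) < size (enum {: slot}) by rewrite index_mem mem_enum.
have := congr1 (nth 0 ^~ (index p (enum {: slot}))) map_slot_rank_enum.
rewrite (nth_map p) // nth_index ?mem_enum // nth_iota ?add0n //.
by rewrite -(size_iota 0 (n * d)) -map_slot_rank_enum size_map.
Qed.

Lemma slot_rank_ltl (p q : slot) : p.1 < q.1 -> slot_rank p < slot_rank q.
Proof.
rewrite /slot_rank => lt_pq; have := ltn_ord p.2.
have : p.1.+1 * d <= q.1 * d by rewrite leq_mul2r lt_pq orbT.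
by rewrite mulSn; lia.
Qed.

End Slots.

Section Configuration.
Variables n d : nat.
Local Notation slot := ('I_n * 'I_d)%type.
Variable G : config n d.

Definition forward (p : slot) : bool := p.1 < G p.1 p.2.

Definition forward_slots : seq slot := filter forward (enum {: slot}).

Definition slot_edge (p : slot) : 'I_n * 'I_n := (p.1, G p.1 p.2).

Definition opp_label (p : slot) : 'I_d := odflt p.2 [pick k | G (G p.1 p.2) k == p.1].

Definition opp_slot (p : slot) : slot := (G p.1 p.2, opp_label p).

Lemma config_edgesE : config_edges G = map slot_edge forward_slots.
Proof.
rewrite /config_edges /forward_slots enum_slotE.
by rewrite (_ : forward = preim slot_edge (fun e => e.1 < e.2)) // -filter_map map_allpairs.
Qed.

Lemma mem_forward_slots p : (p \in forward_slots) = forward p.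
Proof. by rewrite mem_filter mem_enum andbT. Qed.

Lemma sorted_forward_slots : sorted (relpre (@slot_rank n d) ltn) forward_slots.
Proof.
apply: sorted_filter; first by move=> a b c /= /ltn_trans; apply.
by rewrite -sorted_map map_slot_rank_enum iota_ltn_sorted.
Qed.

Hypothesis G_valid : valid_config G.

Lemma config_inj v : injective (G v).
Proof. by case/andP: G_valid => /forallP /(_ v) /injectiveP. Qed.

Lemma config_neq v k : G v k != v.
Proof. by case/andP: G_valid => _ /forallP /(_ v) /forallP /(_ k) /andP []. Qed.

Lemma opp_slotE p : G (opp_slot p).1 (opp_slot p).2 = p.1.
Proof.
rewrite /opp_slot /opp_label /=; case: pickP => [k /eqP // | none].
case/andP: G_valid => _ /forallP /(_ p.1) /forallP /(_ p.2) /andP [_ /existsP [k]].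
by rewrite none.
Qed.

Lemma opp_slotK : involutive opp_slot.
Proof.
move=> p; have opp2_fst : (opp_slot (opp_slot p)).1 = p.1 := opp_slotE p.
have := opp_slotE (opp_slot p); rewrite opp2_fst => /config_inj opp2_snd.
by rewrite [LHS]surjective_pairing opp2_fst opp2_snd -surjective_pairing.
Qed.

Lemma forward_opp_slot p : forward (opp_slot p) = ~~ forward p.
Proof. by rewrite /forward opp_slotE ltn_neqAle leqNgt val_eqE config_neq. Qed.

Lemma card_forward : #|[pred p : slot | forward p]| = n * d %/ 2.
Proof.
have opp_inj := inv_inj opp_slotK.
have image_forward : image opp_slot [pred p | forward p] =i [predC [pred p | forward p]].
  by move=> p; rewrite -{1}(opp_slotK p) (mem_image opp_inj) !inE forward_opp_slot.
have := cardC [pred p : slot | forward p].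
rewrite -(eq_card image_forward) card_image // card_prod !card_ord => <-.
by rewrite addnn -mul2n mulKn.
Qed.

Lemma size_forward_slots : size forward_slots = n * d %/ 2.
Proof. by rewrite -card_forward cardE /enum_mem size_filter -enumT size_filter. Qed.

End Configuration.

Section Prefix.
Variables n d : nat.
Local Notation slot := ('I_n * 'I_d)%type.
Variable G : config n d.
Hypothesis G_valid : valid_config G.

Definition listed_before (b a : slot) : bool :=
  [exists c, [&& forward G c, slot_rank c < slot_rank b & (a == c) || (a == opp_slot G c)]].

Definition closing_path (b : slot) (kk : 'I_d * 'I_d) : bool :=
  [&& G (G b.1 kk.1) kk.2 == G b.1 b.2, listed_before b (b.1, kk.1)
    & listed_before b (G b.1 kk.1, kk.2)].

Lemma listed_before_backward p : ~~ forward G p -> listed_before p p.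
Proof.
move=> bwd_p; apply/existsP; exists (opp_slot G p).
rewrite forward_opp_slot // bwd_p opp_slotK // eqxx orbT andbT /=.
by apply: slot_rank_ltl; rewrite /= ltn_neqAle leqNgt bwd_p val_eqE config_neq.
Qed.

Variables (t : 'I_(n * d %/ 2)) (b : slot) (s : seq slot).
Hypothesis drop_b : drop t (forward_slots G) = b :: s.

Lemma mem_take_forward_slots c : c \in take t.+1 (forward_slots G) ->
  forward G c /\ (c = b \/ slot_rank c < slot_rank b).
Proof.
move=> c_take; split; first by rewrite -mem_forward_slots (mem_take c_take).
have t_lt : t < size (forward_slots G).
  by rewrite ltnNge; apply/negP => /drop_oversize; rewrite drop_b.
have nth_b : nth b (forward_slots G) t = b by move: drop_b; rewrite (drop_nth b t_lt) => -[].
move: c_take; rewrite (take_nth b t_lt) nth_b mem_rcons inE => /predU1P [|c_take]; first by left.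
right; have := sorted_forward_slots G.
rewrite sorted_pairwise; last by move=> x y z /= /ltn_trans; apply.
rewrite -(cat_take_drop t (forward_slots G)) drop_b pairwise_cat => /and3P [/allrelP lt_b _ _].
exact: lt_b c b c_take (mem_head b s).
Qed.

Local Notation prefix_edges := (map (slot_edge G) (take t.+1 (forward_slots G))).

Lemma prefix_adj_slot u w : ((u, w) \in prefix_edges) || ((w, u) \in prefix_edges) ->
  exists2 a : slot, slot_edge G a = (u, w) & [\/ listed_before b a, a = b | a = opp_slot G b].
Proof.
move=> /orP [|] /mapP [c /mem_take_forward_slots [fwd_c c_pos] e_c].
  exists c => //; case: c_pos => [->|lt_cb]; first by constructor 2.
  by constructor 1; apply/existsP; exists c; rewrite fwd_c lt_cb eqxx.
exists (opp_slot G c); first by rewrite /slot_edge opp_slotE //; case: e_c => -> ->.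
case: c_pos => [->|lt_cb]; first by constructor 3.
by constructor 1; apply/existsP; exists c; rewrite fwd_c lt_cb eqxx orbT.
Qed.

Lemma prefix_edges_irrefl u : (u, u) \notin prefix_edges.
Proof.
apply/negP => uu; case: (@prefix_adj_slot u u) => [|a [a_fst a_snd] _]; first by rewrite uu.
by move: (config_neq G_valid a.1 a.2); rewrite a_snd a_fst eqxx.
Qed.

Lemma exists_closing_path : phi G t -> exists kk, closing_path b kk.
Proof.
rewrite /phi ffunE config_edgesE -map_drop drop_b -map_take /in_triangle /=.
move=> /existsP [w /andP [adj_bw adj_w]].
have w_neq_b1 : w != b.1.
  by apply/eqP => w_b1; move: adj_bw; rewrite w_b1 orbb (negbTE (prefix_edges_irrefl _)).
have w_neq_b2 : w != G b.1 b.2.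
  by apply/eqP => w_b2; move: adj_w; rewrite w_b2 orbb (negbTE (prefix_edges_irrefl _)).
rewrite orbC in adj_w.
have [a1 [a1_fst a1_snd] a1_pos] := prefix_adj_slot adj_bw.
have [a2 [a2_fst a2_snd] a2_pos] := prefix_adj_slot adj_w.
have a1_listed : listed_before b a1.
  case: a1_pos => // [a1_b | a1_opp]; first by move: w_neq_b2; rewrite -a1_snd a1_b eqxx.
  by move: (config_neq G_valid b.1 b.2); rewrite -{2}a1_fst a1_opp eqxx.
have a2_listed : listed_before b a2.
  case: a2_pos => // [a2_b | a2_opp]; first by move: w_neq_b1; rewrite -a2_fst a2_b eqxx.
  by move: w_neq_b2; rewrite -a2_fst a2_opp eqxx.
have b1_w : G b.1 a1.2 = w by rewrite -a1_fst.
exists (a1.2, a2.2); rewrite /closing_path /= b1_w -a2_fst a2_snd eqxx.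
by rewrite -a1_fst -!surjective_pairing a1_listed a2_listed.
Qed.

End Prefix.

Section Encoding.
Variables n d : nat.
Local Notation slot := ('I_n * 'I_d)%type.
Local Notation m := (n * d %/ 2).
Implicit Types G : config n d.

Definition code_letter := ('I_d * ('I_n + 'I_d * 'I_d))%type.

(* The [None] branch is never taken when [G] is valid. *)
Definition encode_at G (t : 'I_m) : option code_letter :=
  if drop t (forward_slots G) is b :: _ then
    Some (opp_label G b, if phi G t then
      if [pick kk | closing_path G b kk] is Some kk then inr kk else inl (G b.1 b.2)
    else inl (G b.1 b.2))
  else None.

Definition encode G : {ffun 'I_m -> option code_letter} := [ffun t => encode_at G t].

Definition agree_below G G' (r : nat) :=
  forall q : slot, slot_rank q < r -> G q.1 q.2 = G' q.1 q.2.

Lemma index_forward_slots_agree G G' c : agree_below G G' (slot_rank c) ->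
  forward G c -> forward G' c -> index c (forward_slots G) = index c (forward_slots G').
Proof.
move=> agree fwd_c fwd'_c.
rewrite /forward_slots (index_filter _ fwd_c) (index_filter _ fwd'_c) index_enum_slot.
apply: eq_in_count => q /index_ltn; rewrite index_enum_slot => lt_qc.
by rewrite /forward agree.
Qed.

Lemma position_forward_slot G c : valid_config G -> forward G c ->
  exists2 t : 'I_m, val t = index c (forward_slots G) &
    drop t (forward_slots G) = c :: drop t.+1 (forward_slots G).
Proof.
move=> G_valid; rewrite -mem_forward_slots => c_in.
have c_lt : index c (forward_slots G) < m by rewrite -(size_forward_slots G_valid) index_mem.
by exists (Ordinal c_lt); rewrite //= (drop_nth c) ?index_mem ?nth_index.
Qed.

Section Agreement.
Variables G G' : config n d.
Hypotheses (G_valid : valid_config G) (G'_valid : valid_config G').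
Hypothesis encode_eq : encode G = encode G'.

Lemma common_position c : agree_below G G' (slot_rank c) -> forward G c -> forward G' c ->
  exists t : 'I_m, drop t (forward_slots G) = c :: drop t.+1 (forward_slots G) /\
                   drop t (forward_slots G') = c :: drop t.+1 (forward_slots G').
Proof.
move=> agree fwd_c fwd'_c.
have [t t_idx drop_c] := position_forward_slot G_valid fwd_c.
have [t' t'_idx drop'_c] := position_forward_slot G'_valid fwd'_c.
suff t_t' : t = t' by exists t; split; rewrite // t_t'.
by apply: val_inj; rewrite t_idx t'_idx (index_forward_slots_agree agree).
Qed.

Lemma opp_label_agree c : agree_below G G' (slot_rank c) -> forward G c ->
  G c.1 c.2 = G' c.1 c.2 -> opp_label G c = opp_label G' c.
Proof.
move=> agree fwd_c Gc_eq; have fwd'_c : forward G' c by rewrite /forward -Gc_eq.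
have [t [drop_c drop'_c]] := common_position agree fwd_c fwd'_c.
by move/ffunP/(_ t): encode_eq; rewrite !ffunE /encode_at drop_c drop'_c => -[].
Qed.

Lemma listed_before_agree b a : agree_below G G' (slot_rank b) ->
  listed_before G b a -> G a.1 a.2 = G' a.1 a.2.
Proof.
move=> agree /existsP [c /and3P [fwd_c lt_cb /predU1P [-> | /eqP ->]]]; first exact: agree.
have agree_c : agree_below G G' (slot_rank c) by move=> q lt_qc; apply/agree/(ltn_trans lt_qc).
have Gc_eq := agree c lt_cb.
have opp_eq : opp_slot G c = opp_slot G' c by rewrite /opp_slot (opp_label_agree agree_c) // Gc_eq.
by rewrite opp_slotE // opp_eq opp_slotE.
Qed.

Lemma closing_path_agree b kk : agree_below G G' (slot_rank b) ->
  closing_path G b kk -> closing_path G' b kk -> G b.1 b.2 = G' b.1 b.2.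
Proof.
move=> agree /and3P [/eqP <- listed1 listed2] /and3P [/eqP <- _ _].
by rewrite (listed_before_agree agree listed2) (listed_before_agree agree listed1).
Qed.

Lemma agree_backward p : agree_below G G' (slot_rank p) -> ~~ forward G p ->
  G p.1 p.2 = G' p.1 p.2.
Proof. by move=> agree /(listed_before_backward G_valid); apply: listed_before_agree. Qed.

End Agreement.
End Encoding.

Lemma agree_step n d (G G' : config n d) (p : 'I_n * 'I_d) :
  valid_config G -> valid_config G' -> phi G = phi G' -> encode G = encode G' ->
  agree_below G G' (slot_rank p) -> G p.1 p.2 = G' p.1 p.2.
Proof.
move=> G_valid G'_valid phi_eq encode_eq agree.
have [fwd_p | bwd_p] := boolP (forward G p); last exact: agree_backward.
have [fwd'_p | bwd'_p] := boolP (forward G' p); last first.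
  have agree' : agree_below G' G (slot_rank p) by move=> q /agree.
  have G'p_eq := agree_backward G'_valid G_valid (esym encode_eq) agree' bwd'_p.
  by move: bwd'_p; rewrite /forward G'p_eq -/(forward G p) fwd_p.
have [t [drop_p drop'_p]] := common_position G_valid G'_valid agree fwd_p fwd'_p.
move/ffunP/(_ t): (encode_eq); rewrite !ffunE /encode_at drop_p drop'_p -phi_eq.
case phi_t: (phi G t); last by case.
have phi'_t : phi G' t by rewrite -phi_eq.
have [kk path_kk] := exists_closing_path G_valid drop_p phi_t.
have [kk' path'_kk'] := exists_closing_path G'_valid drop'_p phi'_t.
case: pickP => [k1 path_k1 | /(_ kk)]; last by rewrite path_kk.
case: pickP => [k2 path'_k2 [_ k1_k2] | /(_ kk')]; last by rewrite path'_kk'.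
by apply: (closing_path_agree G_valid G'_valid encode_eq agree path_k1); rewrite k1_k2.
Qed.

Lemma encode_inj n d (G G' : config n d) : valid_config G -> valid_config G' ->
  phi G = phi G' -> encode G = encode G' -> G = G'.
Proof.
move=> G_valid G'_valid phi_eq encode_eq.
have agree r : agree_below G G' r.
  elim/ltn_ind: r => r IH q lt_qr; apply: agree_step => // q' lt_q'q.
  exact: IH (slot_rank q) lt_qr q' lt_q'q.
by apply/ffunP => v; apply/ffunP => k; apply: (agree (slot_rank (v, k)).+1 (v, k)).
Qed.

Section Counting.
Variables n d : nat.
Local Notation m := (n * d %/ 2).

Definition letters (closes : bool) : {set option (code_letter n d)} :=
  if closes then [set Some (lk.1, inr lk.2) | lk : 'I_d * ('I_d * 'I_d)]
  else [set Some (lv.1, inl lv.2) | lv : 'I_d * 'I_n].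

Lemma card_letters closes : #|letters closes| = if closes then d * d ^ 2 else d * n.
Proof.
by case: closes; rewrite card_imset ?card_prod ?card_ord // => -[? ?] [? ?] [-> ->].
Qed.

Lemma encode_in_letters (G : config n d) t : valid_config G -> encode G t \in letters (phi G t).
Proof.
move=> G_valid; rewrite ffunE /encode_at.
case drop_t: (drop t (forward_slots G)) => [|b s].
  by move/eqP: drop_t; rewrite -size_eq0 size_drop size_forward_slots // subn_eq0 leqNgt ltn_ord.
case phi_t: (phi G t); last by apply/imsetP; exists (opp_label G b, G b.1 b.2).
have [kk path_kk] := exists_closing_path G_valid drop_t phi_t.
case: pickP => [kk' _ | /(_ kk)]; last by rewrite path_kk.
by apply/imsetP; exists (opp_label G b, kk').
Qed.

Lemma card_phi_fiber (x : {ffun 'I_m -> bool}) :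
  #|[set G : config n d | valid_config G && (phi G == x)]| <= \prod_(t < m) #|letters (x t)|.
Proof.
set S := [set G | _].
have S_valid G : G \in S -> valid_config G /\ phi G = x by rewrite inE => /andP [-> /eqP].
have encode_injS : {in S &, injective (@encode n d)}.
  move=> G G' /S_valid [G_valid phi_G] /S_valid [G'_valid phi_G'].
  by apply: encode_inj; rewrite ?phi_G ?phi_G'.
rewrite -cardsXn -(card_in_imset encode_injS); apply: subset_leq_card.
apply/subsetP => _ /imsetP [G /S_valid [G_valid <-] ->]; apply/setXnP => t.
exact: encode_in_letters.
Qed.

End Counting.

Local Open Scope ring_scope.

Lemma prod_if_weight (R : comSemiRingType) m (x : {ffun 'I_m -> bool}) (q : R) :
  \prod_(t < m) (if x t then q else 1) = q ^+ weight x.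
Proof. by rewrite -big_mkcond prodr_const; congr (_ ^+ _); apply: eq_card => t; rewrite inE. Qed.

Lemma natr_card_letters (R : fieldType) n d closes : (n%:R : R) != 0 ->
  (#|letters n d closes|%:R : R) = (d * n)%:R * (if closes then (d ^ 2)%:R / n%:R else 1).
Proof.
move=> n_neq0; rewrite card_letters; case: closes; last by rewrite mulr1.
by rewrite !natrM; field.
Qed.

Theorem lemma1 (R : realFieldType) (c : R) (n d : nat) :
  0 < c -> c < 1 -> ~~ odd (d * n) ->
  forall x : {ffun 'I_(n * d %/ 2) -> bool},
    (#|[set G in Gstar n d c | phi G == x]|%:R : R) <=
      ((d * n)%:R) ^+ (d * n %/ 2) * ((d ^ 2)%:R / n%:R) ^+ (weight x).
Proof.
move=> _ _ _ x.
have n_neq0 (t : 'I_(n * d %/ 2)) : (n%:R : R) != 0.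
  rewrite pnatr_eq0 -lt0n; have := leq_trans (ltn_ord t) (leq_div _ 2).
  by move/(leq_ltn_trans (leq0n t)); rewrite muln_gt0 => /andP [].
apply: le_trans (_ : (\prod_(t < n * d %/ 2) #|letters n d (x t)|)%:R <= _).
  rewrite ler_nat; apply: leq_trans (card_phi_fiber x); apply/subset_leq_card/subsetP => G.
  by rewrite !inE => /andP [/andP [-> _] ->].
rewrite natr_prod (eq_bigr _ (fun t _ => @natr_card_letters R n d (x t) (n_neq0 t))).
by rewrite big_split /= prodr_const card_ord prod_if_weight mulnC.
Qed.
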